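(* Let $\alpha,\rho>0$ and let $b_f:\mathbb R_+\to(0,\infty)$ be a bounded function decreasing to $0$ on $\mathbb R_+=[0,\infty)$ with $\int_0^\infty b_f(s)s^{d-1}\,ds<\infty$. Let $f,g:\mathbb R^d\to\mathbb R_+$ be measurable, $f$ bounded, such that $f(x)\le b_f(|x|)$ for all $x\in\mathbb R^d$ and $g(x)\ge\alpha$ for all $|x|\le\rho$. Then $$\sup_{x\in\mathbb R^d,\ \eta\in\Gamma}\ \sum_{y\in\eta} f(x-y)\exp\Bigl\{-\sum_{z\in\eta\setminus\{y\}} g(z-y)\Bigr\}<\infty.$$
   Context: $\Gamma$ denotes the set of locally finite subsets $\gamma\subset\mathbb R^d$, i.e. $|\gamma\cap B|<\infty$ for every bounded Borel set $B\subset\mathbb R^d$, where $|\cdot|$ of a finite set is its cardinality; $|x|$ is the Euclidean norm. *)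

From Stdlib Require Import Reals Lra List.
From Stdlib Require Fin.
Open Scope R_scope.

Definition point (d : nat) := Fin.t d -> R.

Definition vsub {d} (x y : point d) : point d := fun i => x i - y i.

Fixpoint sqsum (d : nat) : (Fin.t d -> R) -> R :=
  match d return (Fin.t d -> R) -> R with
  | O => fun _ => 0
  | S n => fun v => (v Fin.F1)^2 + sqsum n (fun i => v (Fin.FS i))
  end.

Definition enorm {d} (x : point d) : R := sqrt (sqsum d x).

Definition config (d : nat) := point d -> Prop.

(* locally finite: every bounded set (equivalently every closed ball
   centred at 0) contains only finitely many points of eta *)
Definition locally_finite {d} (eta : config d) : Prop :=
  forall r : R, exists l : list (point d),
    forall y, eta y -> enorm y <= r -> In y l.

Definition sumlist {A} (h : A -> R) (l : list A) : R :=
  fold_right (fun a acc => h a + acc) 0 l.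

Definition is_glb (E : R -> Prop) (v : R) : Prop :=
  (forall w, E w -> v <= w) /\ (forall u, (forall w, E w -> u <= w) -> u <= v).

(* v = exp{ - sum_{z in eta \ {y}} g(z-y) } for g >= 0, the (possibly
   infinite) series being the sup of its finite partial sums, with
   exp(-infinity) = 0; i.e. v is the infimum over finite subsets F of
   eta \ {y} of exp{- sum_{z in F} g(z-y)}. *)
Definition expneg_sum {d} (eta : config d) (g : point d -> R) (y : point d)
  (v : R) : Prop :=
  is_glb (fun w => exists F : list (point d),
            NoDup F /\ (forall z, In z F -> eta z /\ z <> y) /\
            w = exp (- sumlist (fun z => g (vsub z y)) F)) v.

(* Tile R^d by cubes of side h = rho / d, so that two points of one cube are at distance at most
   rho and repel each other with g >= alpha.  If the cube of y contains m points of eta, the other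
   m - 1 of them push the exponent above alpha (m - 1), so the weight of y is at most
   e^{-alpha (m - 1)} <= (1 + 1/alpha) / m, and each occupied cube contributes at most
   (1 + 1/alpha) b_f((n - 1) h), where n is its distance in cube steps (max norm) to the cube of x.
   At most (2n + 1)^d cubes lie within n steps, so summation by parts bounds the total by
   sum_n b_f((n - 1) h) ((2n + 1)^d - (2n - 1)^d), whose n-th term is a fixed multiple of the
   integral of b_f(s) s^{d-1} over ((n - 2) h, (n - 1) h). *)

From Stdlib Require Import Reals List Lia Lra ZArith ClassicalEpsilon.
From Coquelicot Require Import Coquelicot.
Open Scope R_scope.

Section SumList.
Context {A : Type}.
Implicit Types (h : A -> R) (l : list A).

Lemma sumlist_ext_in h1 h2 l :
  (forall a, In a l -> h1 a = h2 a) -> sumlist h1 l = sumlist h2 l.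
Proof. induction l; simpl; intros H; [reflexivity|]. rewrite H, IHl; auto. Qed.

Lemma sumlist_le h1 h2 l :
  (forall a, In a l -> h1 a <= h2 a) -> sumlist h1 l <= sumlist h2 l.
Proof.
  induction l as [|a l IH]; simpl; intros H; [lra|].
  pose proof (H a (or_introl eq_refl)). pose proof (IH (fun b Hb => H b (or_intror Hb))). lra.
Qed.

Lemma sumlist_const h c l :
  (forall a, In a l -> h a = c) -> sumlist h l = INR (length l) * c.
Proof.
  induction l as [|a l IH]; intros H; simpl sumlist; [simpl; lra|].
  rewrite H, IH by auto with datatypes. cbn [length]. rewrite S_INR. lra.
Qed.

Lemma sumlist_plus h1 h2 l :
  sumlist (fun a => h1 a + h2 a) l = sumlist h1 l + sumlist h2 l.
Proof. induction l; simpl; [lra|]. rewrite IHl. lra. Qed.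

Lemma sumlist_scal h c l : sumlist (fun a => c * h a) l = c * sumlist h l.
Proof. induction l; simpl; [lra|]. rewrite IHl. lra. Qed.

Lemma sumlist_filter_split h (p : A -> bool) l :
  sumlist h l = sumlist h (filter p l) + sumlist h (filter (fun a => negb (p a)) l).
Proof. induction l as [|a l IH]; simpl; [lra|]. destruct (p a); simpl; lra. Qed.

Lemma sumlist_le_div_length h c l :
  0 <= c -> (forall a, In a l -> h a <= c / INR (length l)) -> sumlist h l <= c.
Proof.
  intros Hc H. destruct l as [|a l']; [simpl; lra|].
  set (l := a :: l'). assert (Hl : 0 < INR (length l)) by (apply lt_0_INR; simpl; lia).
  apply Rle_trans with (sumlist (fun _ => c / INR (length l)) l).
  - apply sumlist_le; exact H.
  - rewrite (sumlist_const _ (c / INR (length l))) by auto. right. field. lra.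
Qed.

Lemma filter_filter_le (p q : A -> bool) l :
  (forall a, p a = true -> q a = true) -> filter p (filter q l) = filter p l.
Proof.
  intros Hpq. induction l as [|a l IH]; simpl; [reflexivity|].
  destruct (q a) eqn:Hq; simpl; rewrite IH; [reflexivity|].
  destruct (p a) eqn:Hp; [rewrite Hpq in Hq by exact Hp; discriminate|reflexivity].
Qed.

End SumList.

Section Fibers.
Context {A B : Type} (decB : forall b b' : B, {b = b'} + {b <> b'}).

Definition fiber (key : A -> B) (b : B) (Y : list A) : list A :=
  filter (fun y => if decB (key y) b then true else false) Y.

Lemma sumlist_indicator (b : B) c (K : list B) :
  NoDup K -> In b K -> sumlist (fun k => if decB b k then c else 0) K = c.
Proof.
  induction 1 as [|k K HkK HK IH]; intros Hb; [destruct Hb|]. simpl.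
  destruct (decB b k) as [<-|Hbk].
  - rewrite (sumlist_const _ 0); [lra|].
    intros k' Hk'. destruct (decB b k'); [subst; contradiction|reflexivity].
  - destruct Hb as [->|Hb]; [contradiction|]. rewrite IH by exact Hb. lra.
Qed.

Lemma sumlist_fibers (key : A -> B) (h : A -> R) (K : list B) (Y : list A) :
  NoDup K -> (forall y, In y Y -> In (key y) K) ->
  sumlist h Y = sumlist (fun k => sumlist h (fiber key k Y)) K.
Proof.
  intros HK. induction Y as [|a Y IH]; intros HY.
  - symmetry. rewrite (sumlist_const _ 0); [simpl; lra|intros; reflexivity].
  - rewrite (sumlist_ext_in _ (fun k => (if decB (key a) k then h a else 0)
                                        + sumlist h (fiber key k Y))).
    + rewrite sumlist_plus, sumlist_indicator, <- IH; auto with datatypes.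
    + intros k _. unfold fiber. simpl. destruct (decB (key a) k); simpl; lra.
Qed.

End Fibers.

Definition delta (W : nat -> R) (n : nat) : R :=
  match n with O => W O | S m => W (S m) - W m end.

Lemma sum_delta W N : sum_f_R0 (delta W) N = W N.
Proof. induction N as [|N IH]; simpl; [reflexivity|]. rewrite IH. lra. Qed.

Lemma filter_all {A} (p : A -> bool) l : (forall a, In a l -> p a = true) -> filter p l = l.
Proof. intros H. apply forallb_filter_id, forallb_forall, H. Qed.

Lemma sumlist_by_levels_le {A} (lev : A -> nat) (W : nat -> R) : forall N (G : nat -> R) (K : list A),
  (forall n, 0 <= G n) -> (forall n m, (n <= m)%nat -> G m <= G n) ->
  (forall k, In k K -> (lev k <= N)%nat) ->
  (forall n, (n <= N)%nat -> INR (length (filter (fun k => Nat.leb (lev k) n) K)) <= W n) ->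
  sumlist (fun k => G (lev k)) K <= sum_f_R0 (fun n => G n * delta W n) N.
Proof.
  induction N as [|N IH]; intros G K G_nonneg G_decr HK Hcount.
  - rewrite (sumlist_const _ (G O))
      by (intros k Hk; specialize (HK k Hk); now replace (lev k) with O by lia).
    specialize (Hcount O (le_n O)). rewrite filter_all in Hcount
      by (intros k Hk; apply Nat.leb_le, HK, Hk).
    simpl. pose proof (G_nonneg O). nra.
  - (* Peel off the constant [G (S N)]: the rest vanishes at level [S N], so the induction
       hypothesis applies to it. *)
    set (G' := fun n => Rmax 0 (G n - G (S N))).
    assert (HG' : forall n, (n <= S N)%nat -> G' n = G n - G (S N)).
    { intros n Hn. apply Rmax_right. pose proof (G_decr n (S N) Hn). lra. }
    set (low := fun k => Nat.leb (lev k) N).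
    assert (Hsplit : sumlist (fun k => G (lev k)) K
                     = sumlist (fun k => G' (lev k)) (filter low K) + INR (length K) * G (S N)).
    { rewrite (sumlist_ext_in _ (fun k => G' (lev k) + G (S N))).
      2:{ intros k Hk. rewrite HG' by auto. ring. }
      rewrite sumlist_plus, (sumlist_const (fun _ => G (S N)) (G (S N))) by auto.
      rewrite (sumlist_filter_split _ low).
      rewrite (sumlist_const _ 0 (filter (fun k => negb (low k)) K)); [ring|].
      intros k Hk. apply filter_In in Hk as [Hk Hhigh]. apply Bool.negb_true_iff, Nat.leb_gt in Hhigh.
      unfold G'. replace (lev k) with (S N) by (specialize (HK k Hk); lia).
      rewrite Rminus_diag. apply Rmax_left. lra. }
    assert (Hlow : sumlist (fun k => G' (lev k)) (filter low K)
                   <= sum_f_R0 (fun n => G n * delta W n) N - G (S N) * W N).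
    { rewrite <- (sum_delta W N), scal_sum, <- minus_sum.
      rewrite (sum_eq _ (fun n => G' n * delta W n)) by (intros n Hn; rewrite HG' by lia; ring).
      apply IH.
      - intros n. apply Rmax_l.
      - intros n m Hnm. apply Rle_max_compat_l. pose proof (G_decr n m Hnm). lra.
      - intros k Hk. apply filter_In in Hk as [_ Hk]. apply Nat.leb_le, Hk.
      - intros n Hn. rewrite filter_filter_le by (intros k Hk; apply Nat.leb_le in Hk;
          apply Nat.leb_le; lia). apply Hcount. lia. }
    specialize (Hcount (S N) (le_n _)).
    rewrite filter_all in Hcount by (intros k Hk; apply Nat.leb_le, HK, Hk).
    pose proof (G_nonneg (S N)). rewrite Hsplit. simpl sum_f_R0. nra.
Qed.

(* The cube of side [h] containing [x] is indexed by [k_i = up (x_i / h)],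
   so that [k_i - 1 <= x_i / h < k_i]. *)
Fixpoint cell (h : R) (d : nat) : (Fin.t d -> R) -> list Z :=
  match d return (Fin.t d -> R) -> list Z with
  | O => fun _ => nil
  | S n => fun x => up (x Fin.F1 / h) :: cell h n (fun i => x (Fin.FS i))
  end.

Fixpoint cell_dist (k c : list Z) : nat :=
  match k, c with
  | a :: k', b :: c' => Nat.max (Z.abs_nat (a - b)) (cell_dist k' c')
  | _, _ => O
  end.

Lemma cell_length h d : forall x, length (cell h d x) = d.
Proof. induction d; intros x; simpl; auto. Qed.

Lemma sqsum_nonneg d : forall x, 0 <= sqsum d x.
Proof. induction d; intros x; simpl; [lra|]. specialize (IHd (fun i => x (Fin.FS i))). nra. Qed.

Lemma up_eq_dist a b : up a = up b -> -1 < a - b < 1.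
Proof.
  intros E. destruct (archimed a) as [A1 A2], (archimed b) as [B1 B2].
  rewrite E in A1, A2. lra.
Qed.

Lemma same_cell_sqsum_le h (hpos : 0 < h) d : forall x y,
  cell h d x = cell h d y -> sqsum d (vsub x y) <= INR d * h ^ 2.
Proof.
  induction d as [|d IH]; intros x y E; simpl in *; [lra|].
  injection E as E1 E2. apply up_eq_dist in E1. specialize (IH _ _ E2). unfold vsub in *.
  assert ((x Fin.F1 - y Fin.F1) ^ 2 <= h ^ 2).
  { replace (x Fin.F1 - y Fin.F1) with (h * (x Fin.F1 / h - y Fin.F1 / h)) by (field; lra).
    set (t := x Fin.F1 / h - y Fin.F1 / h) in *. assert (t ^ 2 <= 1) by nra. nra. }
  destruct d; simpl in *; lra.
Qed.

Lemma same_cell_enorm_le rho d x y : 0 < rho -> (1 <= d)%nat ->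
  cell (rho / INR d) d x = cell (rho / INR d) d y -> enorm (vsub x y) <= rho.
Proof.
  intros Hrho Hd E. assert (Hd1 : 1 <= INR d) by (apply (le_INR 1); exact Hd).
  unfold enorm. rewrite <- (sqrt_pow2 rho) by lra. apply sqrt_le_1_alt.
  eapply Rle_trans; [apply same_cell_sqsum_le, E; apply Rdiv_lt_0_compat; lra|].
  replace (INR d * (rho / INR d) ^ 2) with (rho ^ 2 / INR d) by (field; lra).
  apply Rmult_le_reg_r with (INR d); [lra|]. unfold Rdiv. rewrite Rmult_assoc, Rinv_l by lra.
  pose proof (pow2_ge_0 rho). nra.
Qed.

Lemma up_dist_le h a b : 0 < h ->
  (INR (Z.abs_nat (up (b / h) - up (a / h))) - 1) * h <= Rabs (a - b).
Proof.
  intros hpos. rewrite INR_IZR_INZ, Nat2Z.inj_abs_nat, abs_IZR, minus_IZR.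
  destruct (archimed (b / h)) as [A1 A2], (archimed (a / h)) as [B1 B2].
  replace (a - b) with ((a / h - b / h) * h) by (field; lra).
  rewrite Rabs_mult, (Rabs_right h) by lra.
  apply Rmult_le_compat_r; [lra|]. unfold Rabs; repeat destruct Rcase_abs; lra.
Qed.

Lemma cell_dist_le_enorm h (hpos : 0 < h) d : forall x y,
  (INR (cell_dist (cell h d y) (cell h d x)) - 1) * h <= enorm (vsub x y).
Proof.
  unfold enorm. induction d as [|d IH]; intros x y; cbn [cell cell_dist sqsum].
  - rewrite sqrt_0. simpl. lra.
  - specialize (IH (fun i => x (Fin.FS i)) (fun i => y (Fin.FS i))).
    pose proof (sqsum_nonneg d (vsub (fun i => x (Fin.FS i)) (fun i => y (Fin.FS i)))) as Hr.
    change (sqsum d (fun i => vsub x y (Fin.FS i)))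
      with (sqsum d (vsub (fun i => x (Fin.FS i)) (fun i => y (Fin.FS i)))).
    change (vsub x y Fin.F1) with (x Fin.F1 - y Fin.F1).
    set (r := sqsum d _) in *. set (t := x Fin.F1 - y Fin.F1).
    pose proof (up_dist_le h (x Fin.F1) (y Fin.F1) hpos) as Hfirst. fold t in Hfirst.
    clearbody r t.
    assert (Hrest : sqrt r <= sqrt (t ^ 2 + r))
      by (apply sqrt_le_1_alt; pose proof (pow2_ge_0 t); lra).
    assert (Ht : Rabs t <= sqrt (t ^ 2 + r)).
    { rewrite <- sqrt_Rsqr_abs. apply sqrt_le_1_alt. unfold Rsqr. nra. }
    match goal with |- (INR (Nat.max ?a ?b) - 1) * h <= _ =>
      destruct (Nat.max_spec a b) as [[_ ->]|[_ ->]] end; lra.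
Qed.

Definition zrange (a : Z) (N : nat) : list Z :=
  map (fun i => (a - Z.of_nat N + Z.of_nat i)%Z) (seq 0 (2 * N + 1)).

Fixpoint cells_around (c : list Z) (N : nat) : list (list Z) :=
  match c with
  | nil => nil :: nil
  | a :: c' => flat_map (fun z => map (cons z) (cells_around c' N)) (zrange a N)
  end.

Lemma length_flat_map_const {A B} (f : A -> list B) k l :
  (forall a, In a l -> length (f a) = k) -> length (flat_map f l) = (length l * k)%nat.
Proof. induction l; simpl; intros H; auto. rewrite length_app, H, IHl; auto. Qed.

Lemma length_cells_around c N : length (cells_around c N) = ((2 * N + 1) ^ length c)%nat.
Proof.
  induction c as [|a c IH]; simpl; auto.
  rewrite (length_flat_map_const _ ((2 * N + 1) ^ length c)%nat).
  - unfold zrange. rewrite length_map, length_seq.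
    now replace (N + (N + 0) + 1)%nat with (2 * N + 1)%nat by lia.
  - intros z _. rewrite length_map. auto.
Qed.

Lemma in_cells_around c N : forall k,
  length k = length c -> (cell_dist k c <= N)%nat -> In k (cells_around c N).
Proof.
  induction c as [|a c IH]; intros [|b k] Hl Hdist; simpl in *; try discriminate; auto.
  apply in_flat_map. exists b. split.
  - unfold zrange. apply in_map_iff. exists (Z.to_nat (b - a + Z.of_nat N)).
    assert (Z.abs_nat (b - a) <= N)%nat by lia.
    split; [lia|]. apply in_seq. lia.
  - apply in_map. apply IH; lia.
Qed.

Lemma count_cells_within c N (K : list (list Z)) : NoDup K ->
  (forall k, In k K -> length k = length c /\ (cell_dist k c <= N)%nat) ->
  (length K <= (2 * N + 1) ^ length c)%nat.
Proof.
  intros HK H. rewrite <- length_cells_around. apply NoDup_incl_length; auto.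
  intros k Hk. destruct (H k Hk). apply in_cells_around; auto.
Qed.

Lemma exp_le_compat x y : x <= y -> exp x <= exp y.
Proof. intros [Hlt| ->]; [left; apply exp_increasing, Hlt|right; reflexivity]. Qed.

(* From [e^u >= 1 + u] with [u = alpha (m - 1)]. *)
Lemma exp_neg_le_inv alpha m L : 0 < alpha -> 1 <= m -> m - 1 <= L ->
  exp (- (alpha * L)) <= (1 + / alpha) / m.
Proof.
  intros Ha Hm HL.
  apply Rle_trans with (exp (- (alpha * (m - 1)))); [apply exp_le_compat; nra|].
  rewrite exp_Ropp. set (u := alpha * (m - 1)).
  pose proof (exp_ineq1_le u). pose proof (exp_pos u).
  assert (Hu : 0 <= u) by (unfold u; nra).
  assert (m <= (1 + / alpha) * exp u).
  { assert (alpha * / alpha = 1) by (field; lra). pose proof (Rinv_0_lt_compat alpha Ha).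
    apply Rle_trans with ((1 + / alpha) * (1 + u)); unfold u in *; nra. }
  unfold Rdiv. apply Rmult_le_reg_l with (exp u * m); [nra|].
  replace (exp u * m * / exp u) with m by (field; lra).
  replace (exp u * m * ((1 + / alpha) * / m)) with ((1 + / alpha) * exp u) by (field; lra). lra.
Qed.

Lemma expneg_sum_le d (eta : config d) g y v (F : list (point d)) :
  expneg_sum eta g y v -> NoDup F -> (forall z, In z F -> eta z /\ z <> y) ->
  v <= exp (- sumlist (fun z => g (vsub z y)) F).
Proof. intros [Hlow _] HF HFe. apply Hlow. exists F. auto. Qed.

Section Crowding.
Context {d : nat} {B : Type} (decB : forall b b' : B, {b = b'} + {b <> b'}).
Variables (eta : config d) (g : point d -> R) (key : point d -> B) (alpha : R).
Hypothesis alpha_pos : 0 < alpha.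
Hypothesis same_key_repel : forall z y, key z = key y -> alpha <= g (vsub z y).

(* Each of the other points of the cell of [y] adds at least [alpha] to the exponent. *)
Lemma expneg_sum_le_crowding (Y : list (point d)) y vy :
  NoDup Y -> (forall z, In z Y -> eta z) -> In y Y -> expneg_sum eta g y vy ->
  vy <= (1 + / alpha) / INR (length (fiber decB key (key y) Y)).
Proof.
  intros HY HYe Hy Hv.
  set (cellmates := fiber decB key (key y) Y).
  set (F := filter (fun z => if excluded_middle_informative (z = y) then false else true) cellmates).
  assert (Hcellmates : forall z, In z cellmates <-> In z Y /\ key z = key y).
  { intros z. unfold cellmates, fiber. rewrite filter_In.
    destruct (decB (key z) (key y)); intuition congruence. }
  assert (HF : forall z, In z F <-> In z cellmates /\ z <> y).
  { intros z. unfold F. rewrite filter_In.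
    destruct (excluded_middle_informative (z = y)); intuition congruence. }
  assert (Hcellmates_len : (length cellmates <= S (length F))%nat).
  { apply (NoDup_incl_length (l' := y :: F)); [apply NoDup_filter, HY|].
    intros z Hz. destruct (excluded_middle_informative (z = y)) as [->|Hzy]; [left; reflexivity|].
    right. apply HF. auto. }
  assert (Hcellmates_nonempty : (1 <= length cellmates)%nat).
  { destruct cellmates as [|s S'] eqn:ES; simpl; [|lia]. exfalso. apply (proj2 (Hcellmates y)). auto. }
  assert (Hsum : alpha * INR (length F) <= sumlist (fun z => g (vsub z y)) F).
  { rewrite Rmult_comm, <- (sumlist_const (fun _ => alpha)) by auto.
    apply sumlist_le. intros z Hz. apply same_key_repel. apply Hcellmates, HF, Hz. }
  apply le_INR in Hcellmates_len, Hcellmates_nonempty.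
  rewrite S_INR in Hcellmates_len. simpl in Hcellmates_nonempty.
  eapply Rle_trans.
  - apply (expneg_sum_le _ _ _ _ _ F Hv).
    + apply NoDup_filter, NoDup_filter, HY.
    + intros z Hz. apply HF in Hz as [Hz Hzy]. apply Hcellmates in Hz as [Hz _]. auto.
  - eapply Rle_trans; [apply exp_le_compat, Ropp_le_contravar, Hsum|].
    apply exp_neg_le_inv; auto. lra.
Qed.

Lemma sum_le_occupied_cells (f : point d -> R) (G : B -> R) x (Y : list (point d)) (v : point d -> R) :
  (forall b, 0 <= G b) -> (forall y, 0 <= f (vsub x y)) -> (forall y, f (vsub x y) <= G (key y)) ->
  NoDup Y -> (forall y, In y Y -> eta y) -> (forall y, In y Y -> expneg_sum eta g y (v y)) ->
  sumlist (fun y => f (vsub x y) * v y) Y <= (1 + / alpha) * sumlist G (nodup decB (map key Y)).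
Proof.
  intros G_nonneg f_nonneg f_le HY HYe Hv.
  pose proof (Rinv_0_lt_compat alpha alpha_pos).
  rewrite (sumlist_fibers decB key _ (nodup decB (map key Y))).
  2: apply NoDup_nodup.
  2: intros y Hy; apply nodup_In, in_map, Hy.
  rewrite <- sumlist_scal. apply sumlist_le. intros k _.
  apply sumlist_le_div_length; [pose proof (G_nonneg k); nra|].
  intros y Hy. unfold fiber in Hy. apply filter_In in Hy as [Hy Hky].
  destruct (decB (key y) k) as [<-|]; [|discriminate].
  pose proof (expneg_sum_le_crowding Y y (v y) HY HYe Hy (Hv y Hy)) as Hvy.
  set (q := (1 + / alpha) / INR (length (fiber decB key (key y) Y))) in *.
  assert (0 <= q).
  { apply Rdiv_le_0_compat; [lra|]. apply lt_0_INR.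
    assert (Hin : In y (fiber decB key (key y) Y)).
    { apply filter_In. split; [exact Hy|]. destruct (decB (key y) (key y)); congruence. }
    destruct (fiber decB key (key y) Y); [destruct Hin|simpl; lia]. }
  pose proof (f_nonneg y). pose proof (f_le y).
  replace ((1 + / alpha) * G (key y) / INR (length (fiber decB key (key y) Y))) with (G (key y) * q)
    by (unfold q, Rdiv; ring).
  apply Rle_trans with (f (vsub x y) * q); [apply Rmult_le_compat_l|apply Rmult_le_compat_r]; auto.
Qed.
End Crowding.

Definition cube_count (d n : nat) : R := (2 * INR n + 1) ^ d.

Lemma sumlist_cells_le c (K : list (list Z)) (G : nat -> R) :
  (forall n, 0 <= G n) -> (forall n m, (n <= m)%nat -> G m <= G n) ->
  NoDup K -> (forall k, In k K -> length k = length c) ->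
  sumlist (fun k => G (cell_dist k c)) K
  <= sum_f_R0 (fun n => G n * delta (cube_count (length c)) n)
       (list_max (map (fun k => cell_dist k c) K)).
Proof.
  intros G_nonneg G_decr HK Hlen. apply sumlist_by_levels_le; auto.
  - intros k Hk.
    pose proof (proj1 (list_max_le (map (fun k => cell_dist k c) K) _) (le_n _)) as Hmax.
    rewrite Forall_forall in Hmax. apply Hmax. exact (in_map (fun k => cell_dist k c) K k Hk).
  - intros n _. unfold cube_count.
    replace (2 * INR n + 1) with (INR (2 * n + 1)) by (rewrite plus_INR, mult_INR; simpl; ring).
    rewrite <- pow_INR. apply le_INR, count_cells_within; [apply NoDup_filter, HK|].
    intros k Hk. apply filter_In in Hk as [Hk Hn]. split; [auto|apply Nat.leb_le, Hn].
Qed.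

Lemma RiemannInt_le_RInt_le (f : R -> R) (a C : R) :
  (forall T, a <= T -> exists pr : Riemann_integrable f a T, RiemannInt pr <= C) ->
  forall T, a <= T -> ex_RInt f a T /\ RInt f a T <= C.
Proof.
  intros H T HT. destruct (H T HT) as [pr Hpr]. split.
  - apply ex_RInt_Reals_1, pr.
  - rewrite (RInt_Reals f a T pr). exact Hpr.
Qed.

Lemma pow_sub_pow_le k : forall a b, 0 <= b <= a ->
  a ^ S k - b ^ S k <= INR (S k) * a ^ k * (a - b).
Proof.
  induction k as [|k IH]; intros a b Hab; [simpl; lra|].
  specialize (IH a b Hab).
  replace (a ^ S (S k) - b ^ S (S k)) with (a * (a ^ S k - b ^ S k) + b ^ S k * (a - b))
    by (simpl; ring).
  assert (b ^ S k <= a ^ S k) by (apply pow_incr; lra).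
  pose proof (pow_le b (S k) ltac:(lra)).
  assert (0 <= a - b) by lra.
  pose proof (Rmult_le_compat_l a _ _ ltac:(lra) IH).
  pose proof (Rmult_le_compat_r (a - b) _ _ ltac:(lra) H).
  rewrite S_INR. replace (a ^ S k) with (a * a ^ k) in * by (simpl; ring). nra.
Qed.

Lemma shell_count_le e m : (2 <= m)%nat ->
  delta (cube_count (S e)) (S m) <= 2 * INR (S e) * 7 ^ e * (INR m - 1) ^ e.
Proof.
  intros Hm. apply le_INR in Hm. simpl in Hm. cbn [delta]. unfold cube_count.
  rewrite S_INR.
  pose proof (pow_sub_pow_le e (2 * (INR m + 1) + 1) (2 * INR m + 1) ltac:(lra)) as Hdiff.
  replace (2 * (INR m + 1) + 1 - (2 * INR m + 1)) with 2 in Hdiff by ring.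
  assert ((2 * (INR m + 1) + 1) ^ e <= 7 ^ e * (INR m - 1) ^ e).
  { rewrite <- Rpow_mult_distr. apply pow_incr. lra. }
  pose proof (pos_INR (S e)). rewrite S_INR in *. nra.
Qed.

Lemma cube_count_nonneg d n : 0 <= cube_count d n.
Proof. apply pow_le. pose proof (pos_INR n). lra. Qed.

Lemma delta_cube_count_bounds d n : 0 <= delta (cube_count d) n <= cube_count d n.
Proof.
  destruct n as [|n]; cbn [delta]; [pose proof (cube_count_nonneg d 0); lra|].
  pose proof (cube_count_nonneg d n).
  assert (cube_count d n <= cube_count d (S n)).
  { apply pow_incr. rewrite S_INR. pose proof (pos_INR n). lra. }
  lra.
Qed.

Lemma sum_f_R0_le_telescoping (a I : nat -> R) (A B : R) : 0 <= A -> 0 <= B -> (forall k, 0 <= I k) ->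
  (forall n, (n <= 2)%nat -> a n <= B) ->
  (forall n, (3 <= n)%nat -> a n <= A * (I (n - 1)%nat - I (n - 2)%nat)) ->
  forall N, sum_f_R0 a N <= 3 * B + A * I (pred N).
Proof.
  intros HA HB HI Hsmall Hlarge.
  induction N as [|N IH].
  - pose proof (Hsmall O (Nat.le_0_l _)). pose proof (HI O). simpl. nra.
  - destruct (Nat.le_gt_cases (S N) 2).
    + pose proof (HI N). pose proof (Hsmall 0%nat ltac:(lia)).
      pose proof (Hsmall 1%nat ltac:(lia)). pose proof (Hsmall 2%nat ltac:(lia)).
      destruct N as [|[|N]]; [| |lia]; simpl; nra.
    + simpl sum_f_R0. pose proof (Hlarge (S N) ltac:(lia)) as Hn.
      replace (S N - 1)%nat with N in Hn by lia. replace (S N - 2)%nat with (pred N) in Hn by lia.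
      simpl pred. lra.
Qed.

(* [b_f] at the least distance [(n - 1) h] between points of cells [n] steps apart. *)
Definition radial_profile (bf : R -> R) (h : R) (n : nat) : R := bf (Rmax 0 ((INR n - 1) * h)).

Section RadialSum.
Variables (e : nat) (bf : R -> R) (h C : R).
Hypothesis h_pos : 0 < h.
Hypothesis bf_pos : forall s, 0 <= s -> 0 < bf s.
Hypothesis bf_decr : forall s t, 0 <= s -> s <= t -> bf t <= bf s.
Hypothesis bf_int : forall T, 0 <= T ->
  ex_RInt (fun s => bf s * s ^ e) 0 T /\ RInt (fun s => bf s * s ^ e) 0 T <= C.

Lemma radial_profile_nonneg n : 0 <= radial_profile bf h n.
Proof. left. apply bf_pos, Rmax_l. Qed.

Lemma radial_profile_decr n m : (n <= m)%nat -> radial_profile bf h m <= radial_profile bf h n.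
Proof.
  intros Hnm. apply bf_decr; [apply Rmax_l|]. apply Rle_max_compat_l.
  apply le_INR in Hnm. nra.
Qed.

Lemma ex_RInt_radial a b : 0 <= a <= b -> ex_RInt (fun s => bf s * s ^ e) a b.
Proof.
  intros Hab. apply (ex_RInt_Chasles_2 (V := R_CompleteNormedModule) _ 0); [lra|]. apply bf_int. lra.
Qed.

Lemma bf_shell_le_RInt a b : 0 <= a <= b ->
  (b - a) * (bf b * a ^ e) <= RInt (fun s => bf s * s ^ e) a b.
Proof.
  intros Hab.
  replace ((b - a) * (bf b * a ^ e)) with (RInt (fun _ => bf b * a ^ e) a b)
    by (rewrite RInt_const; reflexivity).
  apply RInt_le; [lra|apply ex_RInt_const|apply ex_RInt_radial; lra|].
  intros s Hs. pose proof (bf_decr s b ltac:(lra) ltac:(lra)). pose proof (bf_pos b ltac:(lra)).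
  pose proof (pow_incr a s e ltac:(lra)). pose proof (pow_le a e ltac:(lra)).
  apply Rmult_le_compat; lra.
Qed.

Lemma RInt_radial_sub a b : 0 <= a <= b ->
  RInt (fun s => bf s * s ^ e) 0 b - RInt (fun s => bf s * s ^ e) 0 a = RInt (fun s => bf s * s ^ e) a b.
Proof.
  intros Hab. rewrite <- (RInt_Chasles _ 0 a b); [unfold plus; simpl; ring| |];
    apply ex_RInt_radial; lra.
Qed.

Lemma near_shell_term_le n : (n <= 2)%nat ->
  radial_profile bf h n * delta (cube_count (S e)) n <= bf 0 * 5 ^ S e.
Proof.
  intros Hn. pose proof (radial_profile_nonneg n).
  assert (radial_profile bf h n <= bf 0) by (apply bf_decr; [lra|apply Rmax_l]).
  pose proof (delta_cube_count_bounds (S e) n) as [Hd0 Hd1].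
  assert (cube_count (S e) n <= 5 ^ S e).
  { apply pow_incr. pose proof (pos_INR n). apply le_INR in Hn. simpl in Hn. lra. }
  nra.
Qed.

Lemma far_shell_term_le m : (2 <= m)%nat ->
  radial_profile bf h (S m) * delta (cube_count (S e)) (S m)
  <= 2 * INR (S e) * 7 ^ e / h ^ S e * RInt (fun s => bf s * s ^ e) ((INR m - 1) * h) (INR m * h).
Proof.
  intros Hm. assert (Hm2 : 2 <= INR m) by (apply (le_INR 2); exact Hm).
  assert (Hprof : radial_profile bf h (S m) = bf (INR m * h)).
  { unfold radial_profile. rewrite S_INR, Rmax_right by nra. f_equal. ring. }
  rewrite Hprof.
  pose proof (bf_shell_le_RInt ((INR m - 1) * h) (INR m * h) ltac:(nra)) as Hint.
  pose proof (shell_count_le e m Hm) as Hcount.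
  pose proof (bf_pos (INR m * h) ltac:(nra)). pose proof (pow_lt h e h_pos).
  pose proof (pow_lt 7 e ltac:(lra)). pose proof (pos_INR (S e)).
  apply Rle_trans with (bf (INR m * h) * (2 * INR (S e) * 7 ^ e * (INR m - 1) ^ e));
    [apply Rmult_le_compat_l; lra|].
  eapply Rle_trans; [|apply Rmult_le_compat_l; [|exact Hint]].
  - right. rewrite Rpow_mult_distr. cbn [pow]. field. lra.
  - apply Rdiv_le_0_compat; [nra|]. cbn [pow]. nra.
Qed.

(* The far shell terms telescope into a multiple of the integral of [b_f(s) s^e] over [0, oo). *)
Lemma radial_sum_bounded : exists M, forall N,
  sum_f_R0 (fun n => radial_profile bf h n * delta (cube_count (S e)) n) N <= M.
Proof.
  set (I := fun k : nat => RInt (fun s => bf s * s ^ e) 0 (INR k * h)).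
  set (A := 2 * INR (S e) * 7 ^ e / h ^ S e).
  set (B := bf 0 * 5 ^ S e).
  assert (HkT : forall k, 0 <= INR k * h) by (intros k; pose proof (pos_INR k); nra).
  assert (HA : 0 <= A).
  { pose proof (pow_lt 7 e ltac:(lra)). pose proof (pow_lt h (S e) h_pos). pose proof (pos_INR (S e)).
    apply Rdiv_le_0_compat; nra. }
  assert (HB : 0 <= B).
  { pose proof (bf_pos 0 (Rle_refl 0)). pose proof (pow_le 5 (S e) ltac:(lra)). unfold B. nra. }
  exists (3 * B + A * C). intros N.
  eapply Rle_trans; [apply (sum_f_R0_le_telescoping _ I A B); auto|].
  - intros k. apply RInt_ge_0; [apply HkT|apply bf_int, HkT|].
    intros s Hs. pose proof (bf_pos s ltac:(lra)). pose proof (pow_le s e ltac:(lra)). nra.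
  - exact near_shell_term_le.
  - intros [|m] Hm; [lia|]. replace (S m - 1)%nat with m by lia.
    assert (Hm1 : 1 <= INR m) by (apply (le_INR 1); lia).
    unfold I. rewrite minus_INR, S_INR by lia.
    replace (INR m + 1 - INR 2) with (INR m - 1) by (simpl; ring).
    rewrite RInt_radial_sub by nra. apply far_shell_term_le. lia.
  - pose proof (bf_int (INR (pred N) * h) (HkT _)). unfold I. nra.
Qed.
End RadialSum.

Theorem lemma3p1 (d : nat) (Hd : (1 <= d)%nat)
  (alpha rho : R) (Halpha : 0 < alpha) (Hrho : 0 < rho)
  (bf : R -> R)
  (bf_pos : forall s, 0 <= s -> 0 < bf s)
  (bf_bdd : exists B, forall s, 0 <= s -> bf s <= B)
  (bf_decr : forall s t, 0 <= s -> s <= t -> bf t <= bf s)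
  (bf_lim : forall eps, 0 < eps -> exists S, forall s, S <= s -> bf s < eps)
  (bf_int : exists C, forall T, 0 <= T ->
      exists pr : Riemann_integrable (fun s => bf s * s ^ (d - 1)) 0 T,
        RiemannInt pr <= C)
  (f g : point d -> R)
  (f_nonneg : forall x, 0 <= f x) (g_nonneg : forall x, 0 <= g x)
  (f_bdd : exists Bf, forall x, f x <= Bf)
  (f_le : forall x, f x <= bf (enorm x))
  (g_ge : forall x, enorm x <= rho -> alpha <= g x) :
  exists M : R, forall (x : point d) (eta : config d), locally_finite eta ->
    forall (Y : list (point d)) (v : point d -> R),
      NoDup Y -> (forall y, In y Y -> eta y) ->
      (forall y, In y Y -> expneg_sum eta g y (v y)) ->
      sumlist (fun y => f (vsub x y) * v y) Y <= M.
Proof.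
  destruct d as [|e]; [lia|]. destruct bf_int as [C HC].
  replace (S e - 1)%nat with e in HC by lia.
  set (h := rho / INR (S e)).
  assert (hpos : 0 < h) by (apply Rdiv_lt_0_compat; [lra|apply lt_0_INR; lia]).
  destruct (radial_sum_bounded e bf h C hpos bf_pos bf_decr) as [M HM].
  { apply RiemannInt_le_RInt_le, HC. }
  exists ((1 + / alpha) * M). intros x eta _ Y v HY HYe Hv.
  set (G := fun k => radial_profile bf h (cell_dist k (cell h (S e) x))).
  eapply Rle_trans.
  { apply (sum_le_occupied_cells (list_eq_dec Z.eq_dec) eta g (cell h (S e)) alpha Halpha)
      with (G := G); auto.
    - intros z y Hzy. apply g_ge, (same_cell_enorm_le rho (S e)); auto.
    - intros k. apply radial_profile_nonneg, bf_pos.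
    - intros y. eapply Rle_trans; [apply f_le|]. apply bf_decr; [apply Rmax_l|].
      apply Rmax_lub; [apply sqrt_pos|apply cell_dist_le_enorm, hpos]. }
  apply Rmult_le_compat_l; [pose proof (Rinv_0_lt_compat alpha Halpha); lra|].
  eapply Rle_trans; [apply sumlist_cells_le|].
  - apply radial_profile_nonneg, bf_pos.
  - apply radial_profile_decr; assumption.
  - apply NoDup_nodup.
  - intros k Hk. apply nodup_In, in_map_iff in Hk as [y [<- _]]. rewrite !cell_length. reflexivity.
  - rewrite cell_length. apply HM.
Qed.
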